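(* Let $m\le n/\log^2 n$ be a positive integer and consider the Move-to-the-Back Dealer $\mathcal D_m$ with parameters $k_1=n/(8e\log n)$, $\ell=m\log n$, $u=\ell$, $d=(k_1-2m\log n)/\ell$, and $k_i=k_1-(i-1)\ell$. For every Guesser with $m$ bits of memory and every epoch $i\in[d]$, the expected number $c_i$ of correct guesses during the $i$-th epoch satisfies $$c_i\le \frac{r_i}{k_i-\ell-u},$$ where $r_i$ is the expected number of reasonable guesses during the $i$-th epoch.
   Context: Card guessing game: a deck of $n$ distinct cards labeled $1,\dots,n$; $n$ turns; in each turn the Dealer selects a card from the remaining deck and places it face down, the Guesser names a card of $[n]$, and the card is revealed and discarded. A guess is correct if it equals the drawn card. A Guesser with $m$ bits of memory keeps a state in $\{0,1\}^m$ between turns and consists of a (possibly randomized) guessing function (state $\mapsto$ guess) and a (possibly randomized) state-transition function (state and revealed card $\mapsto$ new state); she may use unlimited randomness and computation. The Dealer $\mathcal D_m$ (rounding ignored): (1) while more than $k_1$ cards remain, it draws a uniformly random card of the remaining deck; (2) for $i=1,\dots,d$, the $i$-th epoch consists of the $\ell$ turns starting when $k_i$ cards remain; at the start of each epoch a set $B$ is set to $\emptyset$; in each turn of the epoch the Dealer draws a uniformly random card of (remaining deck)$\setminus B$, and after the Guesser's guess $g$ in that turn, if $g$ is still in the remaining deck and $|B|<u$, then $g$ is added to $B$; (3) when $2m\log n$ cards remain, it draws uniformly random cards from the remaining deck until the end. A guess during an epoch is reasonable if it is a card of (remaining deck)$\setminus B$ at that turn. Expectations are over the randomness of both players. $\log$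 is base 2. *)

From mathcomp Require Import all_boot all_order all_algebra.
From mathcomp Require Import reals sequences exp.
Set Implicit Arguments. Unset Strict Implicit. Unset Printing Implicit Defensive.
Import Order.TTheory GRing.Theory Num.Theory.
Local Open Scope ring_scope.

Section CardGame.
Variable R : realType.

Definition log2 (x : R) : R := ln x / ln 2.

Definition is_distr (T : finType) (p : T -> R) :=
  (forall x, 0 <= p x) /\ \sum_(x : T) p x = 1.

Definition mstate (m : nat) := {ffun 'I_m -> bool}.

(** A Guesser with m bits of memory for the deck [n] = 'I_n:
    an initial (possibly random) state, a randomized guessing function
    state |-> guess, and a randomized state-transition function
    (state, revealed card) |-> new state. *)
Record guesser (n m : nat) := Guesser {
  g_init  : mstate m -> R;
  g_guess : mstate m -> 'I_n -> R;
  g_trans : mstate m -> 'I_n -> mstate m -> R }.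

Definition valid_guesser n m (G : guesser n m) :=
  [/\ is_distr (g_init G),
      forall s, is_distr (g_guess G s) &
      forall s c, is_distr (g_trans G s c)].

Section Params.
Variables n m : nat.
Definition k1 : nat := Num.truncn (n%:R / (8 * expR 1 * log2 n%:R)).
Definition ell : nat := Num.truncn (m%:R * log2 n%:R).
Definition uu : nat := ell.
Definition dd : nat :=
  Num.truncn (((k1%:R : R) - 2 * m%:R * log2 n%:R) / ell%:R).
Definition kk (i : nat) : nat := (k1 - i.-1 * ell)%N.

Definition inEpoch (k : nat) : bool :=
  has (fun i => (kk i - ell < k <= kk i)%N) (iota 1 dd).
Definition startEpoch (k : nat) : bool :=
  has (fun i => k == kk i) (iota 1 dd).
End Params.

Section Game.
Variables n m : nat.
Variable G : guesser n m.

(** configuration between turns: (remaining deck, the set B, memory state) *)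
Definition conf := ({set 'I_n} * {set 'I_n} * mstate m)%type.

Definition Beff (deck B : {set 'I_n}) : {set 'I_n} :=
  if startEpoch n m #|deck| then set0 else B.

Definition draw (deck B : {set 'I_n}) (c : 'I_n) : R :=
  let A := if inEpoch n m #|deck| then deck :\: B else deck in
  if c \in A then (#|A|%:R)^-1 else 0.

Definition newB (deck B : {set 'I_n}) (g c : 'I_n) : {set 'I_n} :=
  if inEpoch n m #|deck| && (g \in deck :\ c) && (#|B| < uu n m)%N
  then g |: B else B.

Definition step (mu : conf -> R) : conf -> R := fun x' =>
  \sum_(x : conf) mu x *
    \sum_(g : 'I_n) \sum_(c : 'I_n)
      let: (deck, B0, s) := x in
      let B := Beff deck B0 in
      g_guess G s g * draw deck B c * g_trans G s c x'.2 *
      ((x'.1.1 == deck :\ c) && (x'.1.2 == newB deck B g c))%:R.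

Definition mu0 : conf -> R := fun x =>
  (x.1 == (setT, set0))%:R * g_init G x.2.

Definition mu_at (t : nat) : conf -> R := iter t step mu0.

Definition prob_turn (t : nat)
    (E : {set 'I_n} -> {set 'I_n} -> 'I_n -> 'I_n -> bool) : R :=
  \sum_(x : conf) mu_at t x *
    \sum_(g : 'I_n) \sum_(c : 'I_n)
      let: (deck, B0, s) := x in
      let B := Beff deck B0 in
      g_guess G s g * draw deck B c * (E deck B g c)%:R.

Definition correct_ev (deck B : {set 'I_n}) (g c : 'I_n) : bool := g == c.
Definition reasonable_ev (deck B : {set 'I_n}) (g c : 'I_n) : bool :=
  g \in deck :\: B.

(** turn t (0-indexed) is in epoch i iff the number n - t of remaining cards
    satisfies k_i - ell < n - t <= k_i *)
Definition in_epoch_i (i t : nat) : bool :=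
  (kk n m i - ell n m < n - t <= kk n m i)%N.

Definition c_epoch (i : nat) : R :=
  \sum_(t < n | in_epoch_i i t) prob_turn t correct_ev.
Definition r_epoch (i : nat) : R :=
  \sum_(t < n | in_epoch_i i t) prob_turn t reasonable_ev.
End Game.
End CardGame.

(* During epoch i the Dealer draws uniformly from deck \ B.  On the support of
   the distribution of configurations at turn t we have |deck| + t = n and
   |B| <= u; in a turn of epoch i the deck therefore has more than k_i - ell
   cards, so deck \ B has at least k_i - ell - u of them (a positive number,
   since 1 <= i <= d forces k_i > 2 ell).  Hence, for every configuration and
   every guess g, the probability of a hit is [g in deck \ B] / |deck \ B|,
   at most [g reasonable] / (k_i - ell - u); averaging over configurations and
   guesses and summing over the turns of the epoch gives the bound. *)

From mathcomp Require Import all_boot all_order all_algebra.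
From mathcomp Require Import reals sequences exp.
From mathcomp Require Import zify lra.
Set Implicit Arguments. Unset Strict Implicit. Unset Printing Implicit Defensive.
Import Order.TTheory GRing.Theory Num.Theory.
Local Open Scope ring_scope.

Section EpochParameters.
Variables (R : realType) (n m : nat).

Lemma ell_gt0 : (0 < dd R n m)%N -> (0 < ell R n m)%N.
Proof. by rewrite /dd; case: (ell R n m) => //; rewrite invr0 mulr0 truncn0. Qed.

Lemma two_ell_lt_kk i : (1 <= i <= dd R n m)%N -> (2 * ell R n m < kk R n m i)%N.
Proof.
move=> /andP[i_ge1 i_led].
have ell_pos := ell_gt0 (leq_trans i_ge1 i_led).
have ell_le : (ell R n m)%:R <= m%:R * log2 n%:R :> R.
  by rewrite truncn_le; move: ell_pos; rewrite /ell truncn_gt0; lra.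
have d_le : (i%:R : R) <= ((k1 R n)%:R - 2 * m%:R * log2 n%:R) / (ell R n m)%:R.
  rewrite -truncn_ge_nat //.
  by move: (leq_trans i_ge1 i_led); rewrite /dd truncn_gt0; lra.
have : (i.+2 * ell R n m <= k1 R n)%N.
  rewrite -(ler_nat R) !natrM mulrSr mulrS.
  rewrite ler_pdivlMr ?ltr0n // in d_le.
  lra.
rewrite /kk; lia.
Qed.

Lemma epoch_denomE i : (2 * ell R n m < kk R n m i)%N ->
  (kk R n m i)%:R - (ell R n m)%:R - (uu R n m)%:R = (kk R n m i - 2 * ell R n m)%:R :> R.
Proof. by move=> /ltnW room; rewrite /uu (natrB _ room) natrM; lra. Qed.

End EpochParameters.

Section UniformDraw.
Variables (R : numFieldType) (T : finType).

Definition unif (A : {set T}) (c : T) : R := if c \in A then #|A|%:R^-1 else 0.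

Lemma unif_hit (A : {set T}) g : \sum_c unif A c * (g == c)%:R = (g \in A)%:R / #|A|%:R.
Proof.
rewrite (bigD1 g) //= eqxx mulr1 big1 ?addr0 => [|c /negbTE]; last first.
  by rewrite eq_sym => ->; rewrite mulr0.
by rewrite /unif; case: (g \in A); rewrite ?mul1r ?mul0r.
Qed.

Lemma unif_mass (A : {set T}) g : \sum_c unif A c * (g \in A)%:R = (g \in A)%:R.
Proof.
have [gA|] := boolP (g \in A); last by move=> _; rewrite big1 // => c _; rewrite mulr0.
under eq_bigr do rewrite mulr1.
rewrite /unif -big_mkcond sumr_const -(mulr_natr (#|A|%:R^-1)) mulVf // pnatr_eq0 -lt0n.
by apply/card_gt0P; exists g.
Qed.

Lemma guess_hit_le (w : T -> R) (A : {set T}) (D : R) :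
  (forall g, 0 <= w g) -> 0 < D -> D <= #|A|%:R ->
  \sum_g \sum_c w g * unif A c * (g == c)%:R <=
    (\sum_g \sum_c w g * unif A c * (g \in A)%:R) / D.
Proof.
move=> w_ge0 D_gt0 D_le; rewrite mulr_suml; apply: ler_sum => g _.
under eq_bigr do rewrite -mulrA; under [X in _ <= X / D]eq_bigr do rewrite -mulrA.
rewrite -!big_distrr -mulrA unif_hit unif_mass ler_wpM2l //.
case: (g \in A); rewrite ?mul0r // !mul1r lef_pV2 ?posrE //.
exact: lt_le_trans D_le.
Qed.

End UniformDraw.

Lemma leq_sub_cardsD (T : finType) (A B : {set T}) : (#|A| - #|B| <= #|A :\: B|)%N.
Proof. by rewrite cardsD leq_sub2l // subset_leq_card // subsetIr. Qed.

Section Game.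
Variables (R : realType) (n m : nat) (G : guesser R n m).
Hypothesis G_valid : valid_guesser G.

Lemma draw_ge0 (deck B : {set 'I_n}) c : 0 <= draw R m deck B c.
Proof. by rewrite /draw /=; case: ifP => // _; rewrite invr_ge0. Qed.

Lemma draw_in_epoch (deck B : {set 'I_n}) :
  inEpoch R n m #|deck| -> draw R m deck B =1 unif R (deck :\: B).
Proof. by move=> ep c; rewrite /draw ep. Qed.

Lemma draw_neq0_mem (deck B : {set 'I_n}) c : draw R m deck B c != 0 -> c \in deck.
Proof.
rewrite /draw /=; case: ifP => [+ _|]; last by rewrite eqxx.
by case: ifP => // _; rewrite inE => /andP[].
Qed.

Lemma mu_at_ge0 t x : 0 <= mu_at G t x.
Proof.
case: G_valid => [[init_ge0 _] guess_d trans_d].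
elim: t x => [|t IH] x; first by rewrite /mu_at /= /mu0 mulr_ge0.
rewrite /mu_at iterS -/(mu_at G t) /step.
apply: sumr_ge0 => -[[deck B] s] _; apply: mulr_ge0 => //.
apply: sumr_ge0 => g _; apply: sumr_ge0 => c _.
by rewrite !mulr_ge0 ?draw_ge0 //; [case: (guess_d s) | case: (trans_d s c)].
Qed.

Definition conf_inv t (x : conf n m) : bool :=
  (#|x.1.1| + t == n)%N && (#|x.1.2| <= uu R n m)%N.

Lemma card_Beff_le (deck B : {set 'I_n}) : (#|Beff R m deck B| <= #|B|)%N.
Proof. by rewrite /Beff; case: ifP; rewrite ?cards0. Qed.

Lemma card_newB_le (deck B : {set 'I_n}) g c :
  (#|B| <= uu R n m)%N -> (#|newB R m deck B g c| <= uu R n m)%N.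
Proof.
rewrite /newB; case: ifP => // /andP[_ B_lt] _.
by rewrite cardsU1; case: (g \notin B); [exact: B_lt | exact: ltnW].
Qed.

Lemma mu_at_notinv t x : ~~ conf_inv t x -> mu_at G t x = 0.
Proof.
elim: t x => [|t IH] x.
  rewrite /mu_at /= /mu0; case: eqP => [x1E|_]; last by rewrite mul0r.
  by rewrite /conf_inv x1E cardsT card_ord cards0 addn0 eqxx.
move=> x_notinv; rewrite /mu_at iterS -/(mu_at G t) /step.
apply: big1 => -[[deck B0] s] _.
have [x_inv|] := boolP (conf_inv t (deck, B0, s)); last by move/IH ->; rewrite mul0r.
rewrite big1 ?mulr0 // => g _; rewrite big1 // => c _.
have [/eqP ->|/draw_neq0_mem c_deck] := boolP (draw R m deck (Beff R m deck B0) c == 0).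
  by rewrite !(mulr0, mul0r).
case: eqP => [x_deck|_]; last by rewrite mulr0.
case: eqP => [x_B|_]; last by rewrite mulr0.
move/negP: x_notinv; case; move/andP: x_inv => [/= /eqP deck_t B_le].
rewrite /conf_inv x_deck x_B card_newB_le ?andbT; last first.
  exact: leq_trans (card_Beff_le _ _) B_le.
(* [cardsD1] and [conf] elaborate [#|deck|] differently; naming it makes lia
   see a single atom. *)
move: (cardsD1 c deck) deck_t; rewrite c_deck; set D := #|deck|; set D' := #|deck :\ c|; lia.
Qed.

Lemma card_drawable_ge i t (deck B0 : {set 'I_n}) s :
  conf_inv t (deck, B0, s) -> in_epoch_i R n m i t ->
  (kk R n m i - 2 * ell R n m <= #|deck :\: Beff R m deck B0|)%N.
Proof.
move=> /andP[/= /eqP deck_t B0_le] /andP[lo hi].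
apply: leq_trans (leq_sub_cardsD _ _).
have := leq_trans (card_Beff_le deck B0) B0_le.
move: deck_t; set D := #|deck|; set Bc := #|Beff R m deck B0|; rewrite /uu; lia.
Qed.

Lemma inEpoch_turn i t (deck : {set 'I_n}) :
  (1 <= i <= dd R n m)%N -> in_epoch_i R n m i t -> (#|deck| + t = n)%N ->
  inEpoch R n m #|deck|.
Proof.
move=> i_range ep deck_t; apply/hasP; exists i; first by rewrite mem_iota; lia.
by move: ep deck_t; rewrite /in_epoch_i; set D := #|deck|; lia.
Qed.

Lemma turn_correct_le i t : (1 <= i <= dd R n m)%N -> in_epoch_i R n m i t ->
  prob_turn G t (@correct_ev n) <=
    prob_turn G t (@reasonable_ev n) /
      ((kk R n m i)%:R - (ell R n m)%:R - (uu R n m)%:R).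
Proof.
move=> i_range ep; have room := two_ell_lt_kk i_range.
rewrite epoch_denomE // /prob_turn mulr_suml; apply: ler_sum => -[[deck B0] s] _.
have [x_inv|/mu_at_notinv ->] := boolP (conf_inv t (deck, B0, s)); last by rewrite !mul0r.
rewrite -mulrA ler_wpM2l ?mu_at_ge0 //.
have deck_ep : inEpoch R n m #|deck|.
  by apply: inEpoch_turn i_range ep _; case/andP: x_inv => /eqP.
under eq_bigr do under eq_bigr do rewrite draw_in_epoch //.
under [X in _ <= X / _]eq_bigr do under eq_bigr do rewrite draw_in_epoch //.
apply: guess_hit_le.
- by case: G_valid => _ guess_d _ g; case: (guess_d s).
- by rewrite ltr0n subn_gt0.
- by rewrite ler_nat; apply: card_drawable_ge x_inv ep.
Qed.

End Game.

Theorem mainTheorem11 (R : realType) (n m : nat) (G : guesser R n m) :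
  valid_guesser G ->
  (0 < m)%N ->
  (m%:R : R) <= n%:R / (log2 n%:R) ^+ 2 ->
  forall i : nat, (1 <= i <= dd R n m)%N ->
    c_epoch G i <=
      r_epoch G i / ((kk R n m i)%:R - (ell R n m)%:R - (uu R n m)%:R).
Proof.
move=> G_valid _ _ i i_range.
rewrite /c_epoch /r_epoch mulr_suml; apply: ler_sum => t ep.
exact: turn_correct_le.
Qed.
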